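(* Let $G$ be a group (finite or infinite), let $F$ be a field of characteristic zero, and let $\mathfrak{S}$ be an $F$-subspace of $F[G]$. Then $\mathfrak{S}$ is a Schur module over $G$ if and only if $\mathfrak{S}$ is closed under the Hadamard product $\circ$ and for every $g\in G$ there exists $\alpha\in\mathfrak{S}$ with $g\in\operatorname{supp}(\alpha)$.
   Context: Elements of $F[G]$ are $\alpha=\sum_{g\in G}\alpha_g g$ with finitely many nonzero $\alpha_g\in F$; $\operatorname{supp}(\alpha)=\{g\in G\mid \alpha_g\neq 0\}$. The Hadamard product is $\alpha\circ\beta=\sum_g\alpha_g\beta_g g$. For finite $C\subseteq G$, $\overline{C}=\sum_{g\in C}g$. A partition $\mathcal{P}$ of $G$ has finite support if every block $C\in\mathcal{P}$ is finite. An $F$-subspace $\mathfrak{S}\subseteq F[G]$ is a Schur module if there is a partition $\mathcal{P}$ of $G$ of finite support such that $\mathfrak{S}=\operatorname{Span}_F\{\overline{C}\mid C\in\mathcal{P}\}$. *)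

From HB Require Import structures.
From mathcomp Require Import all_boot all_order all_algebra.
From mathcomp Require Import finmap.
Set Implicit Arguments. Unset Strict Implicit. Unset Printing Implicit Defensive.
Import Order.TTheory GRing.Theory.
Local Open Scope ring_scope.
Local Open Scope fset_scope.

(* Elements of the group algebra F[G] are represented as functions G -> F
   with finite support. *)
Definition fin_supp (G : choiceType) (F : fieldType) (a : G -> F) : Prop :=
  exists s : seq G, forall g, a g != 0 -> g \in s.

Definition supp (G : choiceType) (F : fieldType) (a : G -> F) : pred G :=
  fun g => a g != 0.

Definition hadamard (G : choiceType) (F : fieldType) (a b : G -> F) : G -> F :=
  fun g => a g * b g.

Definition is_subspace (G : choiceType) (F : fieldType) (S : (G -> F) -> Prop)
  : Prop :=
  [/\ forall a, S a -> fin_supp a,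
      S (fun _ => 0),
      (forall a b, S a -> S b -> S (fun g => (a g + b g)%R)) &
      (forall (c : F) a, S a -> S (fun g => c * a g))].

Definition bar (G : choiceType) (F : fieldType) (C : {fset G}) : G -> F :=
  fun g => (g \in C)%:R.

Definition fin_partition (G : choiceType) (P : {fset G} -> Prop) : Prop :=
  (forall C, P C -> C != fset0) /\
  (forall g, exists C, [/\ P C, g \in C & forall C', P C' -> g \in C' -> C' = C]).

Definition span_bars (G : choiceType) (F : fieldType) (P : {fset G} -> Prop)
  (a : G -> F) : Prop :=
  exists l : seq (F * {fset G}),
    (forall p, p \in l -> P p.2) /\
    (forall g, a g = \sum_(p <- l) p.1 * @bar G F p.2 g).

Definition schur_module (G : choiceType) (F : fieldType) (S : (G -> F) -> Prop)
  : Prop :=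
  exists P : {fset G} -> Prop,
    fin_partition P /\ (forall a, S a <-> span_bars P a).

(* If S is closed under the Hadamard product, it is closed under
   b |-> p(b) * b for every polynomial p, and Lagrange interpolation on the
   finitely many values of b then puts the indicator of every nonzero level
   set of b into S.  Call g and h inseparable when every element of S takes
   the same value at g and at h.  The class of g lies in the support of any
   a in S with a(g) <> 0, so it is finite, and a finite product of level-set
   indicators separating g from the other points of that support is exactly
   its indicator; hence the classes form a partition whose indicators lie in
   S, and subtracting a(x) times the class of x repeatedly exhausts any a in S.
   Conversely the indicators of the blocks of a partition multiply as
   orthogonal idempotents.  Neither the group structure of G nor the
   characteristic of F plays any role. *)

From HB Require Import structures.
From mathcomp Require Import all_boot all_order all_algebra.
From mathcomp Require Import finmap.
From Stdlib Require Import Classical FunctionalExtensionality.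
Set Implicit Arguments. Unset Strict Implicit. Unset Printing Implicit Defensive.
Import GRing.Theory.
Local Open Scope ring_scope.

Section Subspace.

Variables (G : choiceType) (F : fieldType) (S : (G -> F) -> Prop).
Hypothesis HS : is_subspace S.

Lemma subspace_eq a b : S a -> a =1 b -> S b.
Proof. by move=> Sa /functional_extensionality <-. Qed.

Lemma subspace_fin_supp a : S a -> fin_supp a.
Proof. by case: HS => fin_S _ _ _; apply: fin_S. Qed.

Lemma subspace0 : S (fun _ => 0).
Proof. by case: HS. Qed.

Lemma subspaceD a b : S a -> S b -> S (fun g => a g + b g).
Proof. by case: HS => _ _ S_add _; apply: S_add. Qed.

Lemma subspaceZ c a : S a -> S (fun g => c * a g).
Proof. by case: HS => _ _ _ S_scale; apply: S_scale. Qed.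

Lemma subspaceB a b : S a -> S b -> S (fun g => a g - b g).
Proof.
move=> Sa Sb; apply: subspace_eq (subspaceD Sa (subspaceZ (-1) Sb)) _ => g.
by rewrite mulN1r.
Qed.

Lemma subspace_sum (T : eqType) (r : seq T) (f : T -> G -> F) :
  (forall i, i \in r -> S (f i)) -> S (fun g => \sum_(i <- r) f i g).
Proof.
elim: r => [|i r IHr] Sf.
  by apply: subspace_eq subspace0 _ => g; rewrite big_nil.
have Sr : S (fun g => \sum_(j <- r) f j g).
  by apply: IHr => j jr; apply: Sf; rewrite inE jr orbT.
apply: subspace_eq (subspaceD (Sf i (mem_head i r)) Sr) _ => g.
by rewrite big_cons.
Qed.

Hypothesis S_hadamard : forall a b, S a -> S b -> S (hadamard a b).

Lemma subspace_horner_mul (p : {poly F}) b :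
  S b -> S (fun h => p.[b h] * b h).
Proof.
move=> Sb; elim/poly_ind: p => [|p c Sp].
  by apply: subspace_eq subspace0 _ => h; rewrite horner0 mul0r.
apply: subspace_eq (subspaceD (S_hadamard Sp Sb) (subspaceZ c Sb)) _ => h.
by rewrite /hadamard hornerMXaddC mulrDl.
Qed.

(* Lagrange interpolation through the finitely many values of [b], with the
   extra factor [b h] killing the value [0] taken off the support. *)
Lemma subspace_level_set b c :
  S b -> c != 0 -> S (fun h => (b h == c)%:R).
Proof.
move=> Sb c0; have [s supp_s] := subspace_fin_supp Sb.
pose q : {poly F} :=
  c^-1 *: \prod_(v <- map b s | v != c) ((c - v)^-1 *: ('X - v%:P)).
have qE x : q.[x] = c^-1 * \prod_(v <- map b s | v != c) ((c - v)^-1 * (x - v)).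
  by rewrite hornerZ horner_prod; congr (_ * _); apply: eq_bigr => v _;
    rewrite hornerZ hornerXsubC.
apply: subspace_eq (subspace_horner_mul q Sb) _ => h.
rewrite qE; have [-> | bh_neq_c] := eqVneq (b h) c.
  rewrite big1_seq ?mulr1 ?mulVf // => v /andP[v_neq_c _].
  by rewrite mulVf // subr_eq0 eq_sym.
have [-> | bh0] := eqVneq (b h) 0; first by rewrite mulr0.
apply/eqP; rewrite !mulf_eq0 prodf_seq_eq0; apply/orP; left; apply/orP; right.
apply/hasP; exists (b h); first by rewrite map_f ?supp_s.
by rewrite bh_neq_c subrr mulr0 eqxx.
Qed.

Definition inseparable (g h : G) : Prop := forall b, S b -> b h = b g.

Lemma subspace_separate a g h :
  S a -> a g != 0 -> ~ inseparable g h -> exists e, [/\ S e, e g = 1 & e h = 0].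
Proof.
move=> Sa ag nsep.
have [b Sb /eqP bh_neq_bg] : exists2 b, S b & b h <> b g.
  apply: NNPP => none; apply: nsep => b Sb.
  by apply: NNPP => bhg; apply: none; exists b.
have [bg0 | bg_neq0] := eqVneq (b g) 0; last first.
  exists (fun x => (b x == b g)%:R); split; first exact: subspace_level_set.
    by rewrite eqxx.
  by rewrite (negbTE bh_neq_bg).
have bh_neq0 : b h != 0 by rewrite -bg0.
pose e0 x : F := (a x == a g)%:R; pose f x : F := (b x == b h)%:R.
have Se0 : S e0 by apply: subspace_level_set.
have Sf : S f by apply: subspace_level_set.
exists (fun x => e0 x - hadamard e0 f x); split.
- exact: subspaceB (S_hadamard Se0 Sf).
- by rewrite /hadamard /e0 /f bg0 eqxx eq_sym (negbTE bh_neq0) mulr0 subr0.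
- by rewrite /hadamard /f eqxx mulr1 subrr.
Qed.

(* The class of [g] lies in the support of [a], so finitely many separating
   elements, multiplied with the level set of [a] through [g], cut it out. *)
Lemma subspace_class_indicator a g : S a -> a g != 0 ->
  exists e, [/\ S e, forall h, inseparable g h -> e h = 1
            & forall h, ~ inseparable g h -> e h = 0].
Proof.
move=> Sa ag; have [s supp_s] := subspace_fin_supp Sa.
pose e0 x : F := (a x == a g)%:R.
have Se0 : S e0 by apply: subspace_level_set.
have [e [Se eg e_s]] : exists e, [/\ S e, e g = 1 &
    forall h, h \in s -> ~ inseparable g h -> e h = 0].
  elim: s {supp_s} => [|x s [e [Se eg e_s]]].
    by exists e0; split; rewrite // /e0 eqxx.
  have [gx | ngx] := classic (inseparable g x).
    exists e; split=> // h; rewrite inE => /orP[/eqP -> // | ]; exact: e_s.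
  have [f [Sf fg fx]] := subspace_separate Sa ag ngx.
  exists (hadamard e f); split; first exact: S_hadamard.
    by rewrite /hadamard eg fg mulr1.
  move=> h; rewrite inE /hadamard => /orP[/eqP -> _ | hs ngh].
    by rewrite fx mulr0.
  by rewrite e_s ?mul0r.
have Se0e := S_hadamard Se0 Se.
exists (hadamard e0 e); split=> // h => [gh | ngh].
  by rewrite (gh _ Se0e) /hadamard /e0 eqxx eg mulr1.
rewrite /hadamard /e0; have [ahg | ] := eqVneq (a h) (a g).
  by rewrite e_s ?mulr0 // supp_s // ahg.
by rewrite mul0r.
Qed.

Lemma inseparable_class_fset a g : S a -> a g != 0 ->
  exists C : {fset G}, S (bar F C) /\ forall h, h \in C <-> inseparable g h.
Proof.
move=> Sa ag; have [e [Se e1 e0]] := subspace_class_indicator Sa ag.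
have [s supp_s] := subspace_fin_supp Se.
have e_neq0 h : e h != 0 <-> inseparable g h.
  split=> [eh | /e1 ->]; last exact: oner_neq0.
  by apply: NNPP => /e0 eh0; rewrite eh0 eqxx in eh.
pose C := [fset h in s | e h != 0]%fset.
have memC h : h \in C <-> inseparable g h.
  rewrite in_fset inE -e_neq0; split=> [/andP[] // | eh].
  by rewrite supp_s.
exists C; split=> //; apply: subspace_eq Se _ => h.
have [Ch | nCh] := boolP (h \in C); rewrite /bar ?Ch ?(negbTE nCh).
  by apply: e1; apply/memC.
by apply: e0 => /memC; apply/negP.
Qed.

Definition inseparable_class (C : {fset G}) : Prop :=
  exists g, forall h, h \in C <-> inseparable g h.

Lemma inseparable_classP C g : inseparable_class C -> g \in C ->
  forall h, h \in C <-> inseparable g h.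
Proof.
move=> [g0 memC] /memC g0g h; rewrite memC.
by split=> sep b Sb; rewrite sep // g0g.
Qed.

Hypothesis S_cover : forall g : G, exists a, S a /\ g \in supp a.

Lemma inseparable_class_of g :
  exists C, [/\ inseparable_class C, g \in C & S (bar F C)].
Proof.
have [a [Sa ag]] := S_cover g.
have [C [SC memC]] := inseparable_class_fset Sa ag.
by exists C; split=> //; [exists g | apply/memC].
Qed.

Lemma inseparable_class_eq C D g :
  inseparable_class C -> inseparable_class D -> g \in C -> g \in D -> C = D.
Proof.
move=> PC PD gC gD; apply/fsetP => h; apply/idP/idP.
  by move/(inseparable_classP PC gC)/(inseparable_classP PD gD).
by move/(inseparable_classP PD gD)/(inseparable_classP PC gC).
Qed.

Lemma fin_partition_inseparable_classes : fin_partition inseparable_class.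
Proof.
split=> [C [g memC] | g].
  by apply/fset0Pn; exists g; apply/memC.
have [C [PC gC _]] := inseparable_class_of g.
by exists C; split=> // D PD gD; apply: inseparable_class_eq PD PC gD gC.
Qed.

Lemma subspace_bar_inseparable_class C : inseparable_class C -> S (bar F C).
Proof.
move=> PC; have [g memC] := PC; have gC : g \in C by apply/memC.
have [D [PD gD SD]] := inseparable_class_of g.
by rewrite (inseparable_class_eq PC PD gC gD).
Qed.

(* Peel off [a x] times the class of some [x] in the support of [a]: this
   kills [a] on that whole class and leaves it unchanged elsewhere. *)
Lemma span_inseparable_classes a : S a -> span_bars inseparable_class a.
Proof.
move=> Sa; have [s] := subspace_fin_supp Sa.
elim: s a Sa => [|x s IHs] a Sa supp_s.
  exists [::]; split=> // g; rewrite big_nil.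
  by apply/eqP; apply: contraT => /supp_s.
have [ax0 | ax] := eqVneq (a x) 0.
  apply: IHs => // h ah; move: (supp_s h ah); rewrite inE.
  by case/orP=> // /eqP hx; rewrite hx ax0 eqxx in ah.
have [C [PC xC SC]] := inseparable_class_of x.
pose a' g := a g - a x * bar F C g.
have [l [Pl a'E]] : span_bars inseparable_class a'.
  apply: IHs; first exact: subspaceB (subspaceZ _ SC).
  move=> h; rewrite /a' /bar; have [hC | hC] := boolP (h \in C).
    by rewrite ((inseparable_classP PC xC h).1 hC a Sa) mulr1 subrr eqxx.
  rewrite mulr0 subr0 => ah; move: (supp_s h ah); rewrite inE.
  by case/orP=> // /eqP hx; rewrite hx xC in hC.
exists ((a x, C) :: l); split.
  by move=> p; rewrite inE => /orP[/eqP -> | /Pl].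
by move=> g; rewrite big_cons -a'E /a' addrC subrK.
Qed.

Lemma schur_module_of_hadamard_closed : schur_module S.
Proof.
exists inseparable_class; split; first exact: fin_partition_inseparable_classes.
move=> a; split; first exact: span_inseparable_classes.
move=> [l [Pl aE]].
apply: subspace_eq (subspace_sum (f := fun p g => p.1 * bar F p.2 g) _) _.
  by move=> p /Pl /subspace_bar_inseparable_class; apply: subspaceZ.
by move=> g; rewrite aE.
Qed.

End Subspace.

Section Partition.

Variables (G : choiceType) (F : fieldType) (P : {fset G} -> Prop).
Hypothesis HP : fin_partition P.

Lemma bar_mul_partition C D g : P C -> P D ->
  bar F C g * bar F D g = (C == D)%:R * bar F C g.
Proof.
move=> PC PD; rewrite /bar.
have [gC | gC] /= := boolP (g \in C); last by rewrite mul0r mulr0.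
have [_ /(_ g)[B [_ _ uniqB]]] := HP.
have [gD | gD] /= := boolP (g \in D).
  by rewrite (uniqB C) // (uniqB D) // eqxx.
have [CD | _] := eqVneq C D; first by rewrite CD (negbTE gD) in gC.
by rewrite mulr0 mul0r.
Qed.

Lemma span_bars_bar C : P C -> span_bars P (bar F C).
Proof.
move=> PC; exists [:: (1, C)]; split; first by move=> p; rewrite inE => /eqP ->.
by move=> g; rewrite big_seq1 mul1r.
Qed.

Lemma span_bars_hadamard (a b : G -> F) :
  span_bars P a -> span_bars P b -> span_bars P (hadamard a b).
Proof.
move=> [la [Pla aE]] [lb [Plb bE]].
exists [seq (p.1 * q.1 * (p.2 == q.2)%:R, p.2) | p <- la, q <- lb]; split.
  by move=> r /allpairsP[[p q] [pla _ ->]] /=; apply: Pla.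
move=> g; rewrite big_allpairs_dep /hadamard aE bE mulr_suml.
apply: eq_big_seq => p pla; rewrite mulr_sumr; apply: eq_big_seq => q qlb /=.
by rewrite mulrACA bar_mul_partition ?mulrA //; [apply: Pla | apply: Plb].
Qed.

End Partition.

Lemma hadamard_closed_of_schur_module (G : choiceType) (F : fieldType)
    (S : (G -> F) -> Prop) :
  schur_module S ->
  (forall a b, S a -> S b -> S (hadamard a b)) /\
  (forall g : G, exists a, S a /\ g \in supp a).
Proof.
move=> [P [HP SE]]; split=> [a b /SE Pa /SE Pb | g].
  by apply/SE; apply: span_bars_hadamard.
have [C [PC gC _]] := HP.2 g.
exists (bar F C); split; first by apply/SE; apply: span_bars_bar.
by rewrite unfold_in /supp /bar gC oner_neq0.
Qed.

Theorem theorem2p7 (G : groupType) (F : fieldType)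
  (charF0 : [pchar F] =i pred0)
  (S : (G -> F) -> Prop) (HS : is_subspace S) :
  schur_module S <->
  ((forall a b, S a -> S b -> S (hadamard a b)) /\
   (forall g : G, exists a, S a /\ g \in supp a)).
Proof.
split; first exact: hadamard_closed_of_schur_module.
by case=> S_hadamard S_cover; apply: schur_module_of_hadamard_closed.
Qed.
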